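(* Let $L\ge1$ be an integer, let $K_1,\dots,K_L\subseteq[N]$ be pairwise disjoint, $x_0=\sum_{i=1}^L i\,\mathbb{1}_{K_i}$, $K=\bigcup_{i=1}^LK_i$, $\hat K=K\setminus K_L$, and $A\in\mathbb{R}^{m\times N}$. The following are equivalent: (i) $x_0$ is the unique solution of $\min\|x\|_1$ subject to $Ax=Ax_0$ and $x\in[0,L]^N$; (ii) every $\hat x\in\mathbb{R}^N$ of the form $\hat x=\tilde x_{\hat K}+L\,\mathbb{1}_{K_L}$ with $\tilde x\in(0,L)^N$ is the unique solution of $\min\|x\|_1$ subject to $Ax=A\hat x$ and $x\in[0,L]^N$.
   Context: $\mathbb{1}_S$ has entries $1$ on $S$, $0$ elsewhere; $\tilde x_{\hat K}$ agrees with $\tilde x$ on $\hat K$ and is zero elsewhere. ''Unique solution'' means unique minimizer. *)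

From HB Require Import structures.
From mathcomp Require Import all_boot all_order all_algebra.
Set Implicit Arguments. Unset Strict Implicit. Unset Printing Implicit Defensive.
Import Order.TTheory GRing.Theory Num.Theory.
Local Open Scope ring_scope.

Definition l1norm (R : realFieldType) (N : nat) (x : 'cV[R]_N) : R :=
  \sum_(j < N) `|x j 0|.

Definition feasible (R : realFieldType) (m N L : nat) (A : 'M[R]_(m, N))
    (b : 'cV[R]_m) (x : 'cV[R]_N) : Prop :=
  A *m x = b /\ forall j : 'I_N, 0 <= x j 0 <= L%:R.

Definition unique_l1_box_solution (R : realFieldType) (m N L : nat)
    (A : 'M[R]_(m, N)) (x : 'cV[R]_N) : Prop :=
  feasible L A (A *m x) x /\
  forall y : 'cV[R]_N, feasible L A (A *m x) y -> y <> x -> l1norm x < l1norm y.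

Definition indic (R : realFieldType) (N : nat) (S : {set 'I_N}) : 'cV[R]_N :=
  \col_(j < N) (j \in S)%:R.

Definition restrict (R : realFieldType) (N : nat) (S : {set 'I_N}) (x : 'cV[R]_N)
  : 'cV[R]_N :=
  \col_(j < N) (if j \in S then x j 0 else 0).

From HB Require Import structures.
From mathcomp Require Import all_boot all_order all_algebra.
From mathcomp Require Import ring lra.
Set Implicit Arguments. Unset Strict Implicit. Unset Printing Implicit Defensive.

Import Order.TTheory GRing.Theory Num.Theory.
Local Open Scope ring_scope.

(* On the box [0,L]^N the l1 norm is the linear form x |-> \sum_j x_j, so
   being the unique minimiser over {y in the box | A y = A x} is a property of
   the face of the box containing x.  If x' lies in the face of x and some y'
   in the fibre of x' has ||y'|| <= ||x'||, then x + t (y' - x') stays in the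
   box for small t > 0 (x' agrees with x on every active bound), lies in the
   fibre of x and has norm ||x|| + t (||y'|| - ||x'||) <= ||x||.  Both x0 and
   every x^ lie in the face {x = L on K_L, 0 < x < L on K^, x = 0 elsewhere}. *)

Section Box.

Variables (R : realFieldType) (N L : nat).
Hypothesis L_gt0 : (0 < L)%N.
Implicit Types (x d : 'cV[R]_N) (I U : {set 'I_N}).

Definition in_box x : Prop := forall j, 0 <= x j 0 <= L%:R.

Lemma l1norm_in_box x : in_box x -> l1norm x = \sum_j x j 0.
Proof. by move=> bx; apply: eq_bigr => j _; rewrite ger0_norm //; case/andP: (bx j). Qed.

Lemma in_box_feasible_direction x d :
  in_box x -> (forall j, - L%:R <= d j 0 <= L%:R) ->
  (forall j, x j 0 = 0 -> 0 <= d j 0) -> (forall j, x j 0 = L%:R -> d j 0 <= 0) ->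
  exists2 t : R, 0 < t & in_box (x + t *: d).
Proof.
move=> bx bd d_lo d_hi; have L0 : 0 < L%:R :> R by rewrite ltr0n.
pose interior j := 0 < x j 0 < L%:R.
pose delta := \big[Num.min/L%:R]_(j | interior j) Num.min (x j 0) (L%:R - x j 0).
have delta_gt0 : 0 < delta.
  apply/bigmin_gtP; split=> // j /andP[x_gt0 x_ltL].
  by rewrite lt_min x_gt0 subr_gt0.
have delta_leL : delta <= L%:R by apply: bigmin_le_id.
have delta_le j : interior j -> delta <= x j 0 /\ delta <= L%:R - x j 0.
  move=> ij; have := bigmin_le_cond L%:R (fun j => Num.min (x j 0) (L%:R - x j 0)) ij.
  by rewrite le_min => /andP[].
exists (delta / L%:R); first by rewrite divr_gt0.
move=> j; rewrite !mxE.
have t_le1 : delta / L%:R <= 1 by rewrite ler_pdivrMr // mul1r.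
have tL : delta / L%:R * L%:R = delta by rewrite mulfVK // gt_eqF.
have /andP[x_ge0 x_leL] := bx j; have /andP[d_geN d_leL] := bd j.
have t_ge0 : 0 <= delta / L%:R by rewrite divr_ge0 // ltW.
have [x_eq0|x_neq0] := eqVneq (x j 0) 0.
  by move: (d_lo j x_eq0); rewrite x_eq0 add0r => d_ge0; apply/andP; split; nra.
have [xL|x_neqL] := eqVneq (x j 0) L%:R.
  by move: (d_hi j xL); rewrite xL => d_le0; apply/andP; split; nra.
have [lo hi] : delta <= x j 0 /\ delta <= L%:R - x j 0.
  by apply: delta_le; rewrite /interior !lt_neqAle eq_sym x_neq0 x_neqL x_ge0 x_leL.
apply/andP; split; nra.
Qed.

Lemma unique_l1_box_solution_transfer m (A : 'M[R]_(m, N)) x x' :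
  in_box x' -> (forall j, x j 0 = 0 -> x' j 0 = 0) ->
  (forall j, x j 0 = L%:R -> x' j 0 = L%:R) ->
  unique_l1_box_solution L A x -> unique_l1_box_solution L A x'.
Proof.
move=> bx' x'_lo x'_hi [[_ bx] x_min]; split=> [//|y' [Ay' y'_box] y'_neq].
rewrite ltNge; apply/negP => y'_le.
pose d := y' - x'.
have [t t_gt0 y_box] : exists2 t : R, 0 < t & in_box (x + t *: d).
  apply: in_box_feasible_direction => // j; rewrite !mxE.
  - by have := bx' j; have := y'_box j; lra.
  - by move/x'_lo ->; rewrite subr0; case/andP: (y'_box j).
  - by move/x'_hi ->; rewrite subr_le0; case/andP: (y'_box j).
have y_feas : feasible L A (A *m x) (x + t *: d).
  by split=> //; rewrite mulmxDr -scalemxAr mulmxBr Ay' subrr scaler0 addr0.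
have y_neq : x + t *: d <> x.
  move/eqP; rewrite -subr_eq0 addrC addKr scaler_eq0 gt_eqF //= subr_eq0.
  by move/eqP.
have := x_min _ y_feas y_neq.
rewrite !l1norm_in_box // in y'_le *.
have yE j : (x + t *: d) j 0 = x j 0 + t * (y' j 0 - x' j 0) by rewrite !mxE.
rewrite (eq_bigr _ (fun j _ => yE j)) big_split /= -mulr_sumr sumrB; nra.
Qed.

Definition has_face I U x : Prop :=
  forall j, [/\ j \in U -> x j 0 = L%:R,
                j \notin U -> j \in I -> 0 < x j 0 < L%:R
              & j \notin U -> j \notin I -> x j 0 = 0].

Lemma has_face_in_box I U x : has_face I U x -> in_box x.
Proof.
move=> fx j; have [xU xI x0] := fx j.
have [/xU ->|jU] := boolP (j \in U); first by rewrite ler0n lexx.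
have [/(xI jU) /andP[? ?]|jI] := boolP (j \in I); first by rewrite !ltW.
by rewrite x0 // lexx ler0n.
Qed.

Lemma unique_l1_box_solution_face m (A : 'M[R]_(m, N)) I U x x' :
  has_face I U x -> has_face I U x' ->
  unique_l1_box_solution L A x -> unique_l1_box_solution L A x'.
Proof.
move=> fx fx'; have L0 : 0 < L%:R :> R by rewrite ltr0n.
apply: unique_l1_box_solution_transfer; first exact: has_face_in_box fx'.
- move=> j xj0; have [xU xI x0] := fx j; have [x'U _ x'0] := fx' j.
  have jU : j \notin U by apply/negP => /xU; rewrite xj0 => /eqP; rewrite eq_sym gt_eqF.
  have jI : j \notin I by apply/negP => /(xI jU); rewrite xj0 ltxx.
  exact: x'0.
- move=> j xjL; have [xU xI x0] := fx j; have [x'U _ _] := fx' j.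
  apply: x'U; apply/negPn/negP => jU.
  have [/(xI jU)|/(x0 jU)] := boolP (j \in I); first by rewrite xjL ltxx andbF.
  by move=> x_eq0; move: L0; rewrite -xjL x_eq0 ltxx.
Qed.

End Box.

Section IndicatorSums.

Variables (R : realFieldType) (N : nat) (T : eqType).
Variables (K : T -> {set 'I_N}) (c : T -> R) (r : seq T).

Lemma mem_bigcup_seq j : (j \in \bigcup_(i <- r) K i) = has (fun i => j \in K i) r.
Proof. by elim: r => [|i s IHs]; rewrite ?big_nil ?in_set0 // big_cons in_setU IHs. Qed.

Lemma sum_indic_coord j :
  (\sum_(i <- r) c i *: indic R (K i)) j 0 = \sum_(i <- r) c i * (j \in K i)%:R.
Proof. by rewrite summxE; apply: eq_bigr => i _; rewrite !mxE. Qed.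

Lemma sum_indic_disjoint i0 j :
  uniq r -> {in r &, forall i k, i != k -> [disjoint K i & K k]} ->
  i0 \in r -> j \in K i0 -> (\sum_(i <- r) c i *: indic R (K i)) j 0 = c i0.
Proof.
move=> r_uniq r_disj i0r jK; rewrite sum_indic_coord (bigD1_seq i0) //= jK mulr1.
rewrite big1_seq ?addr0 // => i /andP[i_neq ir].
by rewrite (disjointFr (r_disj _ _ i0r ir _) jK) ?mulr0 // eq_sym.
Qed.

Lemma sum_indic_notin_bigcup j :
  j \notin \bigcup_(i <- r) K i -> (\sum_(i <- r) c i *: indic R (K i)) j 0 = 0.
Proof.
rewrite mem_bigcup_seq => /hasPn jK; rewrite sum_indic_coord big1_seq // => i ir.
by rewrite (negbTE (jK i ir)) mulr0.
Qed.

End IndicatorSums.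

Section Faces.

Variables (R : realFieldType) (N L : nat).

Lemma restrict_add_indic_has_face (I U : {set 'I_N}) (xt : 'cV[R]_N) :
  [disjoint I & U] -> (forall j, 0 < xt j 0 < L%:R) ->
  has_face L I U (restrict I xt + L%:R *: indic R U).
Proof.
move=> IU xt_int j; rewrite !mxE.
have [jU|jU] := boolP (j \in U).
  by split=> // _; rewrite (disjointFl IU jU) mulr1 add0r.
by split=> // _ => [jI | /negbTE ->]; rewrite ?jI mulr0 addr0.
Qed.

Lemma sum_nat_indic_has_face (K : nat -> {set 'I_N}) :
  (0 < L)%N -> {in index_iota 1 L.+1 &, forall i k, i != k -> [disjoint K i & K k]} ->
  has_face L ((\bigcup_(1 <= i < L.+1) K i) :\: K L) (K L)
    (\sum_(1 <= i < L.+1) i%:R *: indic R (K i)).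
Proof.
move=> L_gt0 K_disj j; split=> [jKL | jKL | jKL jKhat].
- rewrite (sum_indic_disjoint _ (iota_uniq _ _) K_disj _ jKL) //.
  by rewrite mem_index_iota L_gt0 ltnSn.
- rewrite in_setD jKL => /andP[_]; rewrite mem_bigcup_seq => /hasP[i iL jKi].
  rewrite (sum_indic_disjoint _ (iota_uniq _ _) K_disj iL jKi).
  have i_neqL : i != L by apply: contraNneq jKL => <-.
  move: iL; rewrite mem_index_iota ltnS ltr0n ltr_nat => /andP[-> i_leL].
  by rewrite ltn_neqAle i_neqL.
- apply: sum_indic_notin_bigcup; apply: contra jKhat => jK.
  by rewrite in_setD jK jKL.
Qed.

End Faces.

Theorem theorem4p3 (R : realFieldType) (m N L : nat) (K : nat -> {set 'I_N})
  (A : 'M[R]_(m, N)) :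
  (1 <= L)%N ->
  (forall i j : nat, (1 <= i <= L)%N -> (1 <= j <= L)%N -> i <> j ->
      [disjoint K i & K j]) ->
  let x0 : 'cV[R]_N := \sum_(1 <= i < L.+1) i%:R *: indic R (K i) in
  let Khat : {set 'I_N} := (\bigcup_(1 <= i < L.+1) K i) :\: K L in
  unique_l1_box_solution L A x0 <->
  (forall xt : 'cV[R]_N, (forall j : 'I_N, 0 < xt j 0 < L%:R) ->
     unique_l1_box_solution L A (restrict Khat xt + L%:R *: indic R (K L))).
Proof.
move=> L_gt0 K_disj x0 Khat.
have x0_face : has_face L Khat (K L) x0.
  apply: sum_nat_indic_has_face => // i k.
  by rewrite !mem_index_iota !ltnS => iL kL /eqP; apply: K_disj.
have Khat_KL : [disjoint Khat & K L] by apply/setDidPl; rewrite setDDl setUid.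
split=> [x0_sol xt xt_int | xhat_sol].
  exact: unique_l1_box_solution_face x0_face (restrict_add_indic_has_face Khat_KL xt_int) x0_sol.
have L0 : 0 < L%:R :> R by rewrite ltr0n.
have half_int j : 0 < (const_mx (L%:R / 2) : 'cV[R]_N) j 0 < L%:R.
  by rewrite mxE; apply/andP; split; lra.
exact: unique_l1_box_solution_face
  (restrict_add_indic_has_face Khat_KL half_int) x0_face (xhat_sol _ half_int).
Qed.
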